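(* Let $(\mathcal Q,d)$ be a Hadamard space, $Y$ a $\mathcal Q$-valued random variable, $o\in\mathcal Q$, and $\tau\in\mathcal S_0^+$ with $\mathbb E[\tau'(d(Y,o))]<\infty$. Then: (i) the variance functional $v:\mathcal Q\to\mathbb R$, $v(q):=\mathbb E[\tau(d(Y,q))-\tau(d(Y,o))]$, is (well-defined and) convex; (ii) the set $M:=\arg\min_{q\in\mathcal Q}v(q)$ of $\tau$-Fréchet means is nonempty, closed, bounded and convex, and does not depend on the choice of $o$; (iii) if $\mathcal Y\subset\mathcal Q$ is closed and convex with $\mathbb P(Y\in\mathcal Y)=1$, then $M\subset\mathcal Y$.
   Context: A Hadamard space is a complete metric space $(\mathcal Q,d)$ such that for all $y_0,y_1$ there is $m$ with $\frac12 d(y_0,q)^2+\frac12 d(y_1,q)^2-\frac14 d(y_0,y_1)^2\ge d(q,m)^2$ for all $q$; in it any $q\ne p$ are joined by a unique unit-speed geodesic $\gamma_{q\to p}:[0,d(q,p)]\to\mathcal Q$. A set $A\subset\mathcal Q$ is convex if $\gamma_{q\to p}$ has image in $A$ for all $q\ne p$ in $A$; a function $f:\mathcal Q\to\mathbb R$ is convex if $f\circ\gamma_{q\to p}$ is convex for all $q\ne p$. $\mathcal S_0^+$ is the set of nondecreasing convex $\tau:[0,\infty)\to\mathbb R$, differentiable on $(0,\infty)$ with concave derivative $\tau'$ (with $\tau'(0):=\lim_{x\searrow0}\tau'(x)$), such that $\tau(0)=0$ and $\tau'(x)>0$ for $x>0$. *)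

From HB Require Import structures.
From mathcomp Require Import all_boot all_order all_algebra.
From mathcomp Require Import all_classical all_reals all_analysis.
Set Implicit Arguments. Unset Strict Implicit. Unset Printing Implicit Defensive.
Import Order.TTheory GRing.Theory Num.Theory.
Import numFieldNormedType.Exports.
Local Open Scope classical_set_scope.
Local Open Scope ring_scope.

Section HadamardDefs.
Variables (R : realType) (Q : Type) (d : Q -> Q -> R).

Definition is_metric : Prop :=
  [/\ forall x y, d x y = 0 <-> x = y,
      forall x y, d x y = d y x &
      forall x y z, d x z <= d x y + d y z].

Definition d_complete : Prop :=
  forall u : nat -> Q,
    (forall e, 0 < e -> exists N, forall m n, (N <= m)%N -> (N <= n)%N -> d (u m) (u n) < e) ->
    exists l, forall e, 0 < e -> exists N, forall n, (N <= n)%N -> d (u n) l < e.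

Definition hadamard : Prop :=
  [/\ is_metric, d_complete &
      forall y0 y1, exists m, forall q,
        d q m ^+ 2 <= 2^-1 * d y0 q ^+ 2 + 2^-1 * d y1 q ^+ 2 - 4^-1 * d y0 y1 ^+ 2].

Definition geodesic (q p : Q) (g : R -> Q) : Prop :=
  [/\ g 0 = q, g (d q p) = p &
      forall s t, 0 <= s <= d q p -> 0 <= t <= d q p -> d (g s) (g t) = `|s - t|].

(* convex sets and functions (along every, i.e. the unique, geodesic) *)
Definition d_convex_set (A : set Q) : Prop :=
  forall q p g, A q -> A p -> q <> p -> geodesic q p g ->
    forall t, 0 <= t <= d q p -> A (g t).

Definition convex_on (I : set R) (f : R -> R) : Prop :=
  forall x y t, I x -> I y -> 0 <= t <= 1 ->
    f ((1 - t) * x + t * y) <= (1 - t) * f x + t * f y.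

Definition concave_on (I : set R) (f : R -> R) : Prop :=
  forall x y t, I x -> I y -> 0 <= t <= 1 ->
    (1 - t) * f x + t * f y <= f ((1 - t) * x + t * y).

Definition d_convex_fun (f : Q -> R) : Prop :=
  forall q p g, q <> p -> geodesic q p g ->
    convex_on [set t | 0 <= t <= d q p] (f \o g).

Definition d_open (U : set Q) : Prop :=
  forall x, U x -> exists2 e, 0 < e & forall y, d x y < e -> U y.

Definition d_closed (A : set Q) : Prop :=
  forall x, (forall e, 0 < e -> exists y, A y /\ d x y < e) -> A x.

Definition d_bounded (A : set Q) : Prop :=
  exists c r, forall q, A q -> d c q <= r.

Definition d_measurable {dm} {T : measurableType dm} (Y : T -> Q) : Prop :=
  forall U, d_open U -> measurable (Y @^-1` U).

End HadamardDefs.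

(* The class S_0^+ ; tau is given on R but only its values on [0,oo) matter *)
Definition dtau {R : realType} (tau : R -> R) (x : R) : R :=
  if 0 < x then (derive1 tau) x else lim ((derive1 tau) @ 0^'+).

Definition S0plus {R : realType} (tau : R -> R) : Prop :=
  [/\ (forall x y, 0 <= x -> x <= y -> tau x <= tau y),
      convex_on [set x | 0 <= x] tau,
      (forall x, 0 < x -> derivable tau x 1) &
      [/\ concave_on [set x | 0 < x] (derive1 tau),
      tau 0 = 0 &
      forall x, 0 < x -> 0 < derive1 tau x]].

Definition var_fun {R : realType} {Q : Type} (d : Q -> Q -> R) {dm}
  {T : measurableType dm} (P : probability T R) (Y : T -> Q) (tau : R -> R)
  (o q : Q) : R :=
  fine (\int[P]_w (tau (d (Y w) q) - tau (d (Y w) o))%:E)%E.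

Definition argmin {R : realType} {Q : Type} (v : Q -> R) : set Q :=
  [set q | forall p, v q <= v p].

From HB Require Import structures.
From mathcomp Require Import all_boot all_order all_algebra.
From mathcomp Require Import all_classical all_reals all_analysis.
From mathcomp Require Import ring lra.
From mathcomp Require Import measurable_realfun.
Set Implicit Arguments. Unset Strict Implicit. Unset Printing Implicit Defensive.
Import Order.TTheory GRing.Theory Num.Theory.
Import numFieldNormedType.Exports.
Local Open Scope classical_set_scope.
Local Open Scope ring_scope.

(* In a Hadamard space the CN inequality
     d(x,z)^2 <= (1-t) d(x,q)^2 + t d(x,p)^2 - t(1-t) d(q,p)^2
   has, for each t in [0,1], a unique solution z (found by bisection and
   completeness), and these solutions trace the geodesic from q to p.  Along
   geodesics d(Y,.) is convex, so v is convex because tau is convex and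
   nondecreasing.  Concavity of tau' makes it subadditive, which yields the
   bound |tau b - tau c| <= |b - c| (tau'(a) + tau'(|c - a| + |b - c| + 1));
   with E tau'(d(Y,o)) < oo this makes v finite and continuous, and a
   truncation plus monotone convergence shows that v grows at least linearly in
   d(q,o).  So the sublevel sets of v are closed, convex and bounded, and the
   nested sets {v <= inf v + 1/(n+1)} have a common point: the projections of o
   onto them form a Cauchy sequence.  Finally, projecting a point onto a closed
   convex set containing Y almost surely strictly decreases d(Y,.) and hence v. *)

Section RealFacts.
Variable R : realType.

Lemma exists_invS_lt (e : R) : 0 < e -> exists N : nat, N.+1%:R^-1 < e.
Proof. by move=> e0; have [k] := ltr_add_invr e0; rewrite add0r; exists k. Qed.

Lemma invS_le (m n : nat) : (m <= n)%N -> (n.+1%:R : R)^-1 <= m.+1%:R^-1.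
Proof. by move=> mn; rewrite lef_pV2 ?posrE ?ltr0n // ler_nat ltnS. Qed.

Lemma invS_ge0 (n : nat) : 0 <= (n.+1%:R : R)^-1 <= 1.
Proof. by rewrite invr_ge0 ler0n invf_le1 ?ler1n ?ltr0n. Qed.

Lemma invS_half_le (n : nat) : (n.+1%:R : R)^-1 / 2 <= n.+2%:R^-1.
Proof. by rewrite -invfM -natrM lef_pV2 ?posrE ?ltr0n ?muln_gt0 // ler_nat ltn_Pmulr. Qed.

Lemma ler_of_le_addM (a b k : R) : 0 <= k ->
  (forall e, 0 < e -> e <= 1 -> a <= b + e * k) -> a <= b.
Proof.
move=> k0 H; apply/ler_addgt0Pr => e e0.
set t := Num.min 1 (e / (k + 1)).
have t0 : 0 < t by rewrite lt_min ltr01 divr_gt0 //; lra.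
have t1 : t <= 1 by rewrite ge_min lexx.
have tk : t * (k + 1) <= e by rewrite -ler_pdivlMr ?ge_min ?lexx ?orbT //; lra.
have := H t t0 t1; nra.
Qed.

End RealFacts.

Section MetricFacts.
Variables (R : realType) (Q : Type) (d : Q -> Q -> R).

Definition d_cauchy (u : nat -> Q) : Prop :=
  forall e, 0 < e -> exists N, forall m n, (N <= m)%N -> (N <= n)%N -> d (u m) (u n) < e.

Definition d_cvg (u : nat -> Q) (l : Q) : Prop :=
  forall e, 0 < e -> exists N, forall n, (N <= n)%N -> d (u n) l < e.

Hypothesis dC : forall x y, d x y = d y x.

Lemma d_closed_cvg (S : set Q) (u : nat -> Q) (l : Q) (N0 : nat) : d_closed d S ->
  d_cvg u l -> (forall n, (N0 <= n)%N -> S (u n)) -> S l.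
Proof.
move=> clS ul Su; apply: clS => e e0; have [N hN] := ul e e0.
exists (u (maxn N0 N)); split; first exact/Su/leq_maxl.
by rewrite dC; apply/hN/leq_maxr.
Qed.

End MetricFacts.

Section Hadamard.
Variables (R : realType) (Q : Type) (d : Q -> Q -> R).
Hypothesis Hh : hadamard d.

Lemma dist_eq0 x y : d x y = 0 <-> x = y.
Proof. by case: Hh => [[]]. Qed.

Lemma distxx x : d x x = 0.
Proof. exact/dist_eq0. Qed.

Lemma distC x y : d x y = d y x.
Proof. by case: Hh => [[]]. Qed.

Lemma dist_triangle x y z : d x z <= d x y + d y z.
Proof. by case: Hh => [[]]. Qed.

Lemma dist_ge0 x y : 0 <= d x y.
Proof. have := dist_triangle x y x; rewrite distxx (distC y x); lra. Qed.

Lemma dist_gt0 x y : x <> y -> 0 < d x y.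
Proof. by move=> xy; rewrite lt_def dist_ge0 andbT; apply/eqP => /dist_eq0. Qed.

Lemma dist_complete u : d_cauchy d u -> exists l, d_cvg d u l.
Proof. by case: Hh => _ + _; apply. Qed.

(* The CN inequality of Bruhat and Tits; in a Hadamard space it singles out
   the point at fraction [t] along the geodesic from [q] to [p]. *)
Definition interpolant (q p : Q) (t : R) (z : Q) : Prop :=
  forall x, d x z ^+ 2 <= (1 - t) * d x q ^+ 2 + t * d x p ^+ 2 - t * (1 - t) * d q p ^+ 2.

Lemma interpolant0 q p : interpolant q p 0 q.
Proof. move=> x; lra. Qed.

Lemma interpolant1 q p : interpolant q p 1 p.
Proof. move=> x; lra. Qed.

Lemma interpolant_dist q p t z : 0 <= t <= 1 -> interpolant q p t z ->
  d q z = t * d q p /\ d z p = (1 - t) * d q p.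
Proof.
move=> /andP[t0 t1] H.
have := H q; have := H p; rewrite !distxx (distC p q) (distC p z) => hp hq.
have hD := dist_ge0 q p.
have a1 : d q z <= t * d q p.
  by rewrite -(ler_pXn2r (n := 2)) ?nnegrE ?dist_ge0 ?mulr_ge0 //; nra.
have a2 : d z p <= (1 - t) * d q p.
  by rewrite -(ler_pXn2r (n := 2)) ?nnegrE ?dist_ge0 ?mulr_ge0 ?subr_ge0 //; nra.
have := dist_triangle q z p; split; lra.
Qed.

Lemma interpolant_uniq q p t w z : 0 <= t <= 1 -> interpolant q p t z ->
  d q w = t * d q p -> d w p = (1 - t) * d q p -> w = z.
Proof.
move=> ht H h1 h2; apply/dist_eq0.
have := H w; rewrite (distC w q) h1 h2 => h.
have : d w z ^+ 2 == 0 by rewrite eq_le sqr_ge0 andbT; nra.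
by rewrite sqrf_eq0 => /eqP.
Qed.

Lemma interpolant_dist_le q p a b za zb : 0 <= a <= 1 -> 0 <= b <= 1 ->
  interpolant q p a za -> interpolant q p b zb -> d za zb <= `|a - b| * d q p.
Proof.
move=> ha hb Ha Hb; have [e1 e2] := interpolant_dist ha Ha.
have := Hb za; rewrite (distC za q) e1 e2 => h.
rewrite -(ler_pXn2r (n := 2)) ?nnegrE ?dist_ge0 ?mulr_ge0 ?dist_ge0 //.
rewrite exprMn real_normK ?num_real //; nra.
Qed.

Lemma interpolant_dist_ge q p a b za zb : 0 <= a <= 1 -> 0 <= b <= 1 ->
  interpolant q p a za -> interpolant q p b zb -> `|a - b| * d q p <= d za zb.
Proof.
move=> ha hb Ha Hb.
have [e1 e2] := interpolant_dist ha Ha; have [e3 e4] := interpolant_dist hb Hb.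
have := dist_triangle q za zb; have := dist_triangle q zb za.
rewrite (distC zb za); have := dist_ge0 q p.
by case: (lerP a b) => hab; nra.
Qed.

Lemma interpolant_midpoint q p l r a b : 0 <= l -> l <= r -> r <= 1 ->
  interpolant q p l a -> interpolant q p r b -> exists m, interpolant q p ((l + r) / 2) m.
Proof.
move=> l0 lr r1 Ha Hb.
have hl : 0 <= l <= 1 by apply/andP; split; lra.
have hr : 0 <= r <= 1 by apply/andP; split; lra.
have hab := interpolant_dist_ge hl hr Ha Hb.
rewrite ler0_norm ?subr_le0 // opprB in hab.
have sq : (r - l) ^+ 2 * d q p ^+ 2 <= d a b ^+ 2.
  by rewrite -exprMn lerXn2r ?nnegrE ?mulr_ge0 ?dist_ge0 ?subr_ge0.
have [m Hm] : exists m, forall x,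
    d x m ^+ 2 <= 2^-1 * d a x ^+ 2 + 2^-1 * d b x ^+ 2 - 4^-1 * d a b ^+ 2.
  by case: Hh.
exists m => x; have := Ha x; have := Hb x; have := Hm x.
rewrite (distC a x) (distC b x) (_ : 2^-1 = 1/2) ?div1r // (_ : 4^-1 = 1/4) ?div1r //.
rewrite mulrDl; nra.
Qed.

Lemma interpolant_bracket q p s : 0 <= s <= 1 -> forall n : nat,
  exists l r a b, [/\ 0 <= l <= s, s <= r <= 1 & r - l <= n.+1%:R^-1] /\
    interpolant q p l a /\ interpolant q p r b.
Proof.
move=> /andP[s0 s1]; elim=> [|n [l [r [a [b [[/andP[l0 ls] /andP[sr r1] hlr] [Ha Hb]]]]]]].
  exists 0, 1, q, p; rewrite s0 s1 subr0 invr1 !lexx.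
  by split=> //; split; [exact: interpolant0|exact: interpolant1].
have [m Hm] := interpolant_midpoint (ltac:(lra) : 0 <= l) (ltac:(lra) : l <= r) r1 Ha Hb.
set c := (l + r) / 2 in Hm *.
have [lc cr] : c - l = (r - l) / 2 /\ r - c = (r - l) / 2 by split; rewrite /c; field.
have half : (r - l) / 2 <= n.+2%:R^-1.
  by apply: le_trans (invS_half_le R n); rewrite ler_pM2r //; lra.
have hlc : l <= c by rewrite -subr_ge0 lc; lra.
have hcr : c <= r by rewrite -subr_ge0 cr; lra.
have [c0 c1] : 0 <= c /\ c <= 1 by split; lra.
have [hs|hs] := lerP s c.
  exists l, c, a, m; rewrite l0 ls hs c1 lc /=; split=> //; split=> //.
exists c, r, m, b; rewrite c0 sr r1 (ltW hs) cr /=; split=> //; split=> //.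
Qed.

Lemma interpolant_limit q p s z : 0 <= s <= 1 ->
  (forall e, 0 < e -> exists l a, [/\ 0 <= l <= 1, `|l - s| <= e, d a z <= e &
     interpolant q p l a]) -> interpolant q p s z.
Proof.
move=> /andP[s0 s1] H x.
set A := d x q ^+ 2; set B := d x p ^+ 2; set D := d q p.
have hA : 0 <= A := sqr_ge0 _; have hB : 0 <= B := sqr_ge0 _.
have hD2 : 0 <= D ^+ 2 := sqr_ge0 _.
have hD : 0 <= D := dist_ge0 q p; have hxq := dist_ge0 x q.
have hK : 0 <= 2 * (d x q + D) + 1 + (A + B + D ^+ 2) by lra.
apply: (ler_of_le_addM hK).
move=> e e0 e1; have [l [a [hl hls haz Ha]]] := H e e0.
have [ql _] := interpolant_dist hl Ha.
have hxa : d x a <= d x q + D.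
  have := dist_triangle x q a; rewrite ql -/D; case/andP: hl; nra.
have hxz : d x z ^+ 2 <= (d x a + e) ^+ 2.
  rewrite lerXn2r ?nnegrE ?addr_ge0 ?dist_ge0 ?(ltW e0) //.
  by have := dist_triangle x a z; lra.
(* the right-hand side of the CN inequality is (A + B + D^2)-Lipschitz in t *)
have hlip : (l - s) * (B - A - (1 - l - s) * D ^+ 2) <= e * (A + B + D ^+ 2).
  apply: le_trans (ler_norm _) _; rewrite normrM.
  apply: ler_pM; rewrite ?normr_ge0 //.
  have : `|1 - l - s| <= 1 by case/andP: hl; rewrite ler_norml; lra.
  rewrite !ler_norml => /andP[c0 c1]; apply/andP; split; nra.
have := Ha x; rewrite -/A -/B -/D; have := dist_ge0 x a; nra.
Qed.

End Hadamard.

Section Geodesics.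
Variables (R : realType) (Q : Type) (d : Q -> Q -> R).
Hypothesis Hh : hadamard d.

Lemma interpolant_seq_cauchy q p s (u : nat -> R * Q) :
  (forall n, [/\ 0 <= (u n).1 <= 1, `|(u n).1 - s| <= n.+1%:R^-1 &
                 interpolant d q p (u n).1 (u n).2]) ->
  d_cauchy d (fun n => (u n).2).
Proof.
move=> hu e e0; set D := d q p; have hD : 0 <= D := dist_ge0 Hh q p.
have hK : 0 < 1 + 2 * D by rewrite ltr_pwDl ?mulr_ge0.
have [N hN] := exists_invS_lt (divr_gt0 e0 hK).
exists N => m n hm hn /=.
have [hm1 hm2 hm3] := hu m; have [hn1 hn2 hn3] := hu n.
have hmn : `|(u m).1 - (u n).1| <= 2 * N.+1%:R^-1.
  apply: le_trans (ler_distD s _ _) _; rewrite [`|s - _|]distrC.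
  move: hm2 hn2 (invS_le R hm) (invS_le R hn).
  set a := m.+1%:R^-1; set b := n.+1%:R^-1; set c := N.+1%:R^-1; lra.
have := interpolant_dist_le Hh hm1 hn1 hm3 hn3; rewrite -/D.
move: hN; rewrite ltr_pdivlMr //.
move: hmn (invS_ge0 R N); set c := N.+1%:R^-1; set x := `|_ - _|.
have := normr_ge0 ((u m).1 - (u n).1); rewrite -/x; nra.
Qed.

Lemma interpolant_exists q p s : 0 <= s <= 1 -> exists z, interpolant d q p s z.
Proof.
move=> hs; have [s0 s1] := andP hs.
have H n : exists la : R * Q,
    [/\ 0 <= la.1 <= 1, `|la.1 - s| <= n.+1%:R^-1 & interpolant d q p la.1 la.2].
  have [l [r [a [_ [[/andP[l0 ls] /andP[sr r1] hlr] [Ha _]]]]]] :=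
    interpolant_bracket Hh q p hs n.
  exists (l, a); split=> //=; first by rewrite l0 /=; lra.
  by rewrite ler0_norm ?subr_le0 // opprB; move: hlr; set c := n.+1%:R^-1; lra.
have [u hu] := choice H.
have [z hz] := dist_complete Hh (interpolant_seq_cauchy hu).
exists z; apply: (interpolant_limit Hh hs) => e e0.
have [N1 hN1] := hz e e0; have [N2 hN2] := exists_invS_lt e0.
have [hn1 hn2 hn3] := hu (maxn N1 N2).
exists (u (maxn N1 N2)).1, (u (maxn N1 N2)).2; split=> //.
- by apply: (le_trans hn2); apply: le_trans (ltW hN2); apply/invS_le/leq_maxr.
- exact/ltW/hN1/leq_maxl.
Qed.

Lemma geodesic_of_interpolants q p : q <> p -> exists g, geodesic d q p g /\
  forall t, 0 <= t <= 1 -> interpolant d q p t (g (t * d q p)).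
Proof.
move=> qp; set D := d q p; have D0 : 0 < D := dist_gt0 Hh qp.
have H (u : R) : exists w, 0 <= u / D <= 1 -> interpolant d q p (u / D) w.
  have [hu|hu] := pselect (0 <= u / D <= 1); last by exists q.
  by have [w Hw] := interpolant_exists q p hu; exists w.
have [g Hg] := choice H.
have gin u : 0 <= u <= D -> 0 <= u / D <= 1.
  by case/andP=> u0 u1; rewrite divr_ge0 ?(ltW D0) // ler_pdivrMr // mul1r.
have Hg' t : 0 <= t <= 1 -> interpolant d q p t (g (t * D)).
  by move=> ht; have := Hg (t * D); rewrite mulfK ?gt_eqF //; apply.
have h0 : 0 <= (0 : R) <= 1 by apply/andP; split; lra.
have h1 : 0 <= (1 : R) <= 1 by apply/andP; split; lra.
exists g; split=> //; split.
- have [h _] := interpolant_dist Hh h0 (Hg' 0 h0).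
  by move: h; rewrite !mul0r => /(dist_eq0 Hh) <-.
- have [_ h] := interpolant_dist Hh h1 (Hg' 1 h1).
  by move: h; rewrite mul1r subrr mul0r => /(dist_eq0 Hh) ->.
- move=> s u hs hu; have gs := gin _ hs; have gu := gin _ hu.
  have e : `|s / D - u / D| * D = `|s - u|.
    by rewrite -mulrBl normrM normfV (gtr0_norm D0) mulfVK ?gt_eqF.
  have := interpolant_dist_le Hh gs gu (Hg _ gs) (Hg _ gu).
  have := interpolant_dist_ge Hh gs gu (Hg _ gs) (Hg _ gu).
  by rewrite -/D e => hge hle; apply/eqP; rewrite eq_le hge hle.
Qed.

Lemma interpolant_in_convex S q p t z : d_convex_set d S -> S q -> S p ->
  0 <= t <= 1 -> interpolant d q p t z -> S z.
Proof.
move=> cS Sq Sp ht Hz; have [e1 e2] := interpolant_dist Hh ht Hz.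
have [qp|qp] := pselect (q = p).
  by move: e1; rewrite -qp (distxx Hh) mulr0 => /(dist_eq0 Hh) <-.
have [g [geo Hg]] := geodesic_of_interpolants qp.
have htD : 0 <= t * d q p <= d q p.
  by case/andP: ht => t0 t1; rewrite mulr_ge0 ?dist_ge0 ?ler_piMl ?dist_ge0.
suff -> : z = g (t * d q p) by exact: cS geo _ htD.
by apply: (interpolant_uniq Hh ht (Hg t ht) e1).
Qed.

Lemma geodesic_interpolant q p g x y l : geodesic d q p g ->
  0 <= x <= d q p -> 0 <= y <= d q p -> 0 <= l <= 1 ->
  interpolant d (g x) (g y) l (g ((1 - l) * x + l * y)).
Proof.
move=> [_ _ gi] hx hy hl.
have hu : 0 <= (1 - l) * x + l * y <= d q p.
  by move: hx hy hl => /andP[? ?] /andP[? ?] /andP[? ?]; apply/andP; split; nra.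
have [z Hz] := interpolant_exists (g x) (g y) hl.
suff -> : g ((1 - l) * x + l * y) = z by [].
have [l0 l1] := andP hl; have l1' : 0 <= 1 - l by rewrite subr_ge0.
apply: (interpolant_uniq Hh hl Hz); rewrite !gi //.
- by rewrite (_ : x - _ = l * (x - y)) ?normrM ?(ger0_norm l0) //; ring.
- by rewrite (_ : _ - y = (1 - l) * (x - y)) ?normrM ?(ger0_norm l1') //; ring.
Qed.

Lemma interpolant_dist_convex q p t z x : 0 <= t <= 1 -> interpolant d q p t z ->
  d x z <= (1 - t) * d x q + t * d x p.
Proof.
move=> /andP[t0 t1] Hz; have h := Hz x.
have := dist_triangle Hh x p q; have := dist_triangle Hh x q p; rewrite (distC Hh p q).
have := dist_ge0 Hh x q; have := dist_ge0 Hh x p; have := dist_ge0 Hh q p.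
move=> g3 g2 g1 t2 t3.
have h2 : (d x q - d x p) ^+ 2 <= d q p ^+ 2.
  rewrite -real_normK ?num_real // lerXn2r ?nnegrE //; rewrite ler_norml; lra.
have hz : 0 <= d x z := dist_ge0 Hh x z.
have hc : 0 <= (1 - t) * d x q + t * d x p by rewrite addr_ge0 ?mulr_ge0 ?subr_ge0.
rewrite -(ler_pXn2r (n := 2)) ?nnegrE //.
have tt : 0 <= t * (1 - t) by nra.
have := ler_wpM2l tt h2; nra.
Qed.

End Geodesics.

Section Projection.
Variables (R : realType) (Q : Type) (d : Q -> Q -> R).
Hypothesis Hh : hadamard d.

Lemma convex_dist_sqr_le S x (del : R) y1 y2 : d_convex_set d S ->
  (forall y, S y -> del <= d x y) -> 0 <= del -> S y1 -> S y2 ->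
  d y1 y2 ^+ 2 <= 2 * d x y1 ^+ 2 + 2 * d x y2 ^+ 2 - 4 * del ^+ 2.
Proof.
move=> cS lb del0 S1 S2.
have ht : 0 <= (2 : R)^-1 <= 1.
  by apply/andP; split; [rewrite invr_ge0 | rewrite invf_le1]; lra.
have [z Hz] := interpolant_exists Hh y1 y2 ht.
have hz : del ^+ 2 <= d x z ^+ 2.
  by rewrite lerXn2r ?nnegrE ?dist_ge0 ?lb //; apply: interpolant_in_convex Hz.
have := Hz x; rewrite (_ : 2^-1 = 1/2) ?div1r //; nra.
Qed.

Lemma convex_minimizing_cauchy S x (del : R) (u : nat -> Q) : d_convex_set d S ->
  (forall y, S y -> del <= d x y) -> 0 <= del ->
  (forall n, S (u n) /\ d x (u n) < del + n.+1%:R^-1) -> d_cauchy d u.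
Proof.
move=> cS lb del0 hu.
have bound m n : d (u m) (u n) ^+ 2 <= (4 * del + 2) * (m.+1%:R^-1 + n.+1%:R^-1).
  have [Sm hm] := hu m; have [Sn hn] := hu n.
  have := convex_dist_sqr_le cS lb del0 Sm Sn.
  have := lb _ Sm; have := lb _ Sn; have := invS_ge0 R m; have := invS_ge0 R n.
  move: hm hn; set a := m.+1%:R^-1; set b := n.+1%:R^-1; nra.
move=> e e0; have c0 : 0 < e * e / (2 * (4 * del + 2)) by rewrite divr_gt0 ?mulr_gt0 //; lra.
have [N hN] := exists_invS_lt c0; exists N => m n hm hn.
rewrite -(ltr_pXn2r (n := 2)) ?nnegrE ?dist_ge0 ?(ltW e0) //.
apply: le_lt_trans (bound m n) _.
move: hN (invS_le R hm) (invS_le R hn); rewrite ltr_pdivlMr ?mulr_gt0 //; last lra.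
set a := m.+1%:R^-1; set b := n.+1%:R^-1; set c := N.+1%:R^-1; nra.
Qed.

Lemma exists_min_dist S x : S !=set0 -> d_closed d S -> d_convex_set d S ->
  exists2 p, S p & forall y, S y -> d x p <= d x y.
Proof.
move=> [y0 Sy0] clS cS.
have hE : has_inf [set d x y | y in S].
  by split; [exists (d x y0), y0 | exists 0 => _ [y _ <-]; apply: dist_ge0].
set del := inf [set d x y | y in S].
have lb y : S y -> del <= d x y by move=> Sy; apply: ge_inf; [case: hE | exists y].
have del0 : 0 <= del.
  by apply: lb_le_inf; [exists (d x y0), y0 | move=> _ [y _ <-]; apply: dist_ge0].
have H n : exists y, S y /\ d x y < del + n.+1%:R^-1.
  have i0 : 0 < (n.+1%:R : R)^-1 by rewrite invr_gt0 ltr0n.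
  by have [_ [y Sy <-] h] := inf_adherent i0 hE; exists y.
have [u hu] := choice H.
have [p hp] := dist_complete Hh (convex_minimizing_cauchy cS lb del0 hu).
have Sp : S p by apply: (d_closed_cvg (distC Hh) (N0 := 0) clS hp) => n _; case: (hu n).
exists p => // y Sy; apply: le_trans (lb _ Sy).
apply/ler_addgt0Pr => e e0; have e2 : 0 < e / 2 by rewrite divr_gt0.
have [N1 hN1] := hp _ e2; have [N2 hN2] := exists_invS_lt e2.
have [_ hx] := hu (maxn N1 N2).
have := hN1 _ (leq_maxl N1 N2); have := invS_le R (leq_maxr N1 N2).
have := dist_triangle Hh x (u (maxn N1 N2)) p.
move: hx hN2; set a := (maxn N1 N2).+1%:R^-1; set c := N2.+1%:R^-1; lra.
Qed.

Lemma min_dist_variational S x p : d_convex_set d S -> S p ->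
  (forall y, S y -> d x p <= d x y) ->
  forall y, S y -> d p y ^+ 2 <= d x y ^+ 2 - d x p ^+ 2.
Proof.
move=> cS Sp pmin y Sy.
have K0 : 0 <= d p y ^+ 2 := sqr_ge0 _.
apply: (ler_of_le_addM K0) => t t0 t1.
have ht : 0 <= t <= 1 by rewrite (ltW t0) t1.
have [z Hz] := interpolant_exists Hh p y ht.
have hz : d x p ^+ 2 <= d x z ^+ 2.
  by rewrite lerXn2r ?nnegrE ?dist_ge0 ?pmin //; apply: interpolant_in_convex Hz.
(* dividing the CN inequality at [x] by [t] and letting [t] go to 0 *)
have : t * ((1 - t) * d p y ^+ 2) <= t * (d x y ^+ 2 - d x p ^+ 2).
  by have := Hz x; nra.
rewrite ler_pM2l //; lra.
Qed.

Lemma exists_projection S x : S !=set0 -> d_closed d S -> d_convex_set d S ->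
  exists2 p, S p & forall y, S y -> d p y ^+ 2 <= d x y ^+ 2 - d x p ^+ 2.
Proof.
move=> S0 clS cS; have [p Sp pmin] := exists_min_dist x S0 clS cS.
by exists p => //; apply: min_dist_variational.
Qed.

Lemma nested_closed_convex_meet (S : nat -> set Q) o (B : R) :
  (forall n, S n !=set0) -> (forall n, d_closed d (S n)) ->
  (forall n, d_convex_set d (S n)) -> (forall m n, (m <= n)%N -> S n `<=` S m) ->
  (forall q, S 0 q -> d o q <= B) -> exists p, forall n, S n p.
Proof.
move=> S0 clS cS decS bdS.
have H n : exists p, S n p /\
    forall y, S n y -> d p y ^+ 2 <= d o y ^+ 2 - d o p ^+ 2.
  by have [p Sp hp] := exists_projection o (S0 n) (clS n) (cS n); exists p.
have [u hu] := choice H.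
pose r n := d o (u n) ^+ 2.
have step m n : (m <= n)%N -> d (u m) (u n) ^+ 2 <= r n - r m.
  by move=> mn; apply: (hu m).2; apply: decS mn _ (hu n).1.
have hs : has_sup (range r).
  split; first by exists (r 0), 0.
  exists (B ^+ 2) => _ [n _ <-]; have hn := bdS _ (decS 0 n (leq0n n) _ (hu n).1).
  by rewrite /r lerXn2r ?nnegrE ?(le_trans (dist_ge0 Hh o (u n)) hn) ?dist_ge0.
have le_sup n : r n <= sup (range r) by apply: ub_le_sup; [case: hs | exists n].
have cau : d_cauchy d u.
  move=> e e0; have [_ [N _ <-] hN] := sup_adherent (mulr_gt0 e0 e0) hs.
  exists N => m n hm hn.
  suff : d (u m) (u n) ^+ 2 < e ^+ 2 by rewrite ltr_pXn2r ?nnegrE ?dist_ge0 ?(ltW e0).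
  (* [r] is nondecreasing, so increments beyond [N] are at most [sup r - r N] *)
  have [mn|nm] := leqP m n.
    have := step _ _ mn; have := step _ _ hm; have := le_sup n.
    by have := sqr_ge0 (d (u N) (u m)); rewrite expr2; lra.
  have := step _ _ (ltnW nm); have := step _ _ hn; have := le_sup m.
  by have := sqr_ge0 (d (u N) (u n)); rewrite (distC Hh (u n)) expr2; lra.
have [p hp] := dist_complete Hh cau.
exists p => n; apply: (d_closed_cvg (distC Hh) (N0 := n) (clS n) hp) => k nk.
exact: decS nk _ (hu k).1.
Qed.

End Projection.

Section TauClass.
Variables (R : realType) (tau : R -> R).
Hypothesis Ht : S0plus tau.
Local Notation tau' := (derive1 tau).

Lemma tau_nondecreasing x y : 0 <= x -> x <= y -> tau x <= tau y.
Proof. by move=> x0 xy; case: Ht => + _ _ _; apply. Qed.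

Lemma tau_convex : convex_on [set x | 0 <= x] tau.
Proof. by case: Ht. Qed.

Lemma tau_derivable x : 0 < x -> derivable tau x 1.
Proof. by move=> x0; case: Ht => _ _ + _; apply. Qed.

Lemma derive1_tau_concave : concave_on [set x | 0 < x] tau'.
Proof. by case: Ht => _ _ _ []. Qed.

Lemma tau0 : tau 0 = 0.
Proof. by case: Ht => _ _ _ []. Qed.

Lemma derive1_tau_gt0 x : 0 < x -> 0 < tau' x.
Proof. by case: Ht => _ _ _ [] _ _; apply. Qed.

Lemma tau_max0_nondecreasing : {homo (fun x => tau (Num.max x 0)) : x y / x <= y}.
Proof.
move=> x y xy; apply: tau_nondecreasing; first by rewrite le_max lexx orbT.
by rewrite ge_max !le_max xy lexx orbT.
Qed.

Lemma tau_ge0 x : 0 <= x -> 0 <= tau x.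
Proof. by move=> x0; rewrite -tau0; apply: tau_nondecreasing. Qed.

Lemma tau_quotient_cvg y : 0 < y ->
  (fun h => h^-1 * (tau (h + y) - tau y)) @ 0^' --> tau' y.
Proof.
move=> y0; have := tau_derivable y0; rewrite /derivable.
suff -> : (fun h : R => h^-1 *: ((tau \o shift y) (h *: (1 : R)) - tau y)) =
          (fun h => h^-1 * (tau (h + y) - tau y)) by [].
by apply: funext => h /=; rewrite /shift /= [h *: _]mulr1.
Qed.

Lemma convex_tau_chord x y h : 0 <= x -> 0 < y -> 0 < h / (x - y) <= 1 ->
  tau (h + y) <= tau y + h / (x - y) * (tau x - tau y).
Proof.
move=> x0 y0 /andP[t0 t1].
have xy : x - y != 0 by apply: contraTneq t0 => ->; rewrite invr0 mulr0 ltxx.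
have := tau_convex (ltW y0) x0 (ltac:(rewrite (ltW t0) t1) : 0 <= h / (x - y) <= 1).
by rewrite (_ : _ * y + _ * x = h + y) ?mulrBl ?mulrBr //; [lra | field].
Qed.

Lemma derive1_tau_le_slope x y : 0 < y -> y < x ->
  tau' y <= (tau x - tau y) / (x - y).
Proof.
move=> y0 yx; have xy0 : 0 < x - y by rewrite subr_gt0.
apply: (cvgr_to_le (cvg_dnbhs_at_right (tau_quotient_cvg y0))); near=> h.
have h0 : 0 < h by near: h; exact: nbhs_right_gt.
have h1 : h < x - y by near: h; exact: nbhs_right_lt.
have ht : 0 < h / (x - y) <= 1 by rewrite divr_gt0 // ler_pdivrMr // mul1r ltW.
have := convex_tau_chord (ltW (lt_trans y0 yx)) y0 ht => hc.
rewrite -(ler_pM2l h0) mulrA mulfV ?gt_eqF // mul1r.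
by rewrite (_ : h * _ = h / (x - y) * (tau x - tau y)); [lra | ring].
Unshelve. all: by end_near.
Qed.

Lemma slope_le_derive1_tau x y : 0 <= x -> x < y ->
  (tau y - tau x) / (y - x) <= tau' y.
Proof.
move=> x0 xy; have y0 : 0 < y by apply: le_lt_trans xy.
have yx0 : 0 < y - x by rewrite subr_gt0.
apply: (cvgr_to_ge (cvg_dnbhs_at_left (tau_quotient_cvg y0))); near=> h.
have h0 : h < 0 by near: h; exact: nbhs_left_lt.
have h1 : x - y < h by near: h; apply: nbhs_left_gt; rewrite subr_lt0.
have ht : 0 < h / (x - y) <= 1.
  have -> : h / (x - y) = - h / (y - x) by rewrite -[y - x]opprB invrN mulrNN.
  by rewrite divr_gt0 ?oppr_gt0 //= ler_pdivrMr // mul1r; lra.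
have := convex_tau_chord x0 y0 ht => hc.
rewrite -(ler_nM2l h0) mulrA mulfV ?lt_eqF // mul1r.
rewrite (_ : h * _ = h / (x - y) * (tau x - tau y)); first lra.
by rewrite -[y - x]opprB invrN; ring.
Unshelve. all: by end_near.
Qed.

Lemma tau_tangent_le x y : 0 <= x -> 0 < y -> tau y + tau' y * (x - y) <= tau x.
Proof.
move=> x0 y0; have [yx|xy|->] := ltgtP y x; last by rewrite subrr mulr0 addr0.
- have := derive1_tau_le_slope y0 yx; rewrite ler_pdivlMr ?subr_gt0 //; lra.
- have := slope_le_derive1_tau x0 xy; rewrite ler_pdivrMr ?subr_gt0 //; lra.
Qed.

Lemma derive1_tau_nondecreasing a b : 0 < a -> a <= b -> tau' a <= tau' b.
Proof.
move=> a0 ab; have b0 : 0 < b := lt_le_trans a0 ab.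
have h1 := tau_tangent_le (ltW a0) b0; have h2 := tau_tangent_le (ltW b0) a0.
have : 0 <= (b - a) * (tau' b - tau' a) by lra.
have [->|ab'] := eqVneq a b; first by rewrite lexx.
by rewrite pmulr_rge0 ?subr_ge0 // subr_gt0 lt_neqAle ab' ab.
Qed.

Lemma tau_increment_le x y : 0 <= x -> x <= y -> 0 < y -> tau y - tau x <= tau' y * (y - x).
Proof. by move=> x0 xy y0; have := tau_tangent_le x0 y0; lra. Qed.

Lemma tau_increasing x y : 0 <= x -> x < y -> tau x < tau y.
Proof.
move=> x0 xy; set z := (x + y) / 2.
have [xz zy] : x <= z /\ z < y.
  by rewrite /z; split; [rewrite ler_pdivlMr | rewrite ltr_pdivrMr]; lra.
have z0 : 0 < z by rewrite /z divr_gt0 //; lra.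
have := tau_tangent_le (ltW (lt_trans z0 zy)) z0.
have : 0 < tau' z * (y - z) by rewrite mulr_gt0 ?derive1_tau_gt0 ?subr_gt0.
have := tau_nondecreasing x0 xz; lra.
Qed.

Lemma tau_ge_linear c x : 0 < c -> 0 <= x -> tau' c * (x - c) <= tau x.
Proof. by move=> c0 x0; have := tau_tangent_le x0 c0; have := tau_ge0 (ltW c0); lra. Qed.

Lemma derive1_tau_ge_chord e b u : 0 < e -> e < u -> u <= b ->
  (u - e) / (b - e) * tau' b <= tau' u.
Proof.
move=> e0 eu ub; have be : 0 < b - e by lra.
set t := (u - e) / (b - e).
have ht : 0 <= t <= 1 by rewrite divr_ge0 ?ler_pdivrMr ?mul1r; lra.
have := derive1_tau_concave e0 (lt_le_trans (lt_trans e0 eu) ub) ht.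
rewrite (_ : _ * e + _ * b = u); last by rewrite /t; field; lra.
have := derive1_tau_gt0 e0; case/andP: ht => _ t1; nra.
Qed.

Lemma derive1_tau_subadditive a b : 0 < a -> 0 < b -> tau' (a + b) <= tau' a + tau' b.
Proof.
move=> a0 b0; have fab := derive1_tau_gt0 (addr_gt0 a0 b0).
apply: (ler_of_le_addM (ltW fab)) => e e0 e1.
set m := Num.min a b; have m0 : 0 < m by rewrite lt_min a0 b0.
have [ma mb] : m <= a /\ m <= b by split; rewrite ge_min lexx ?orbT.
(* [tau' a] and [tau' b] lie above the chord of [tau'] from [(eps, 0)] to
   [(a + b, tau' (a + b))], whose values at [a] and [b] add up to almost [tau' (a + b)] *)
set eps := e * m / 2.
have eps0 : 0 < eps by rewrite divr_gt0 ?mulr_gt0.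
have epsm : eps < m by rewrite ltr_pdivrMr //; nra.
have ha := derive1_tau_ge_chord eps0 (lt_le_trans epsm ma) (ler_wpDr (ltW b0) (lexx a)).
have hb := derive1_tau_ge_chord eps0 (lt_le_trans epsm mb) (ler_wpDl (ltW a0) (lexx b)).
have abe : 0 < a + b - eps by lra.
have sum : (a - eps) / (a + b - eps) + (b - eps) / (a + b - eps) = 1 - eps / (a + b - eps).
  by field; lra.
have small : eps / (a + b - eps) <= e.
  rewrite ler_pdivrMr //; have mab : m <= a + b - eps by lra.
  have : eps <= e * m by rewrite /eps; have := mulr_gt0 e0 m0; lra.
  by have := ler_wpM2l (ltW e0) mab; lra.
have := ler_wpM2r (ltW fab) small; nra.
Qed.

Lemma derive1_tau_cvg0 :
  tau' @ (0 : R)^'+ --> inf (tau' @` [set` Interval (BRight (0 : R)) +oo%O]).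
Proof.
apply: nondecreasing_at_right_cvgr => //.
  by move=> x y; rewrite !in_itv /= !andbT => x0 _ xy; apply: derive1_tau_nondecreasing.
by exists 0 => r [x]; rewrite /= in_itv /= andbT => x0 <-; apply/ltW/derive1_tau_gt0.
Qed.

Lemma dtau0E : dtau tau 0 = inf (tau' @` [set` Interval (BRight (0 : R)) +oo%O]).
Proof. by rewrite /dtau ltxx; apply: cvg_lim => //; exact: derive1_tau_cvg0. Qed.

Lemma dtau0_le x : 0 < x -> dtau tau 0 <= tau' x.
Proof.
move=> x0; rewrite dtau0E; apply: ge_inf; last by exists x => //=; rewrite in_itv /= andbT.
by exists 0 => r [y]; rewrite /= in_itv /= andbT => y0 <-; apply/ltW/derive1_tau_gt0.
Qed.

Lemma dtau_ge0 x : 0 <= dtau tau x.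
Proof.
rewrite /dtau; case: ifP => x0; first exact/ltW/derive1_tau_gt0.
have := dtau0E; rewrite /dtau ltxx => ->.
apply: lb_le_inf; first by exists (tau' 1), 1 => //=; rewrite in_itv /= andbT.
by move=> r [y]; rewrite /= in_itv /= andbT => y0 <-; apply/ltW/derive1_tau_gt0.
Qed.

Lemma dtau_nondecreasing : {homo dtau tau : x y / x <= y}.
Proof.
move=> x y xy; rewrite /dtau; case: ifPn => x0; case: ifPn => y0.
- exact: derive1_tau_nondecreasing.
- by move: y0; rewrite (lt_le_trans x0 xy).
- by have := dtau0_le y0; rewrite /dtau ltxx.
- by [].
Qed.

Lemma tau_dist_le x y : 0 <= x -> 0 <= y -> `|tau x - tau y| <= tau' (Num.max x y) * `|x - y|.
Proof.
wlog xy : x y / x <= y.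
  move=> H x0 y0; have [xy|] := boolP (x <= y); first exact: H xy x0 y0.
  rewrite -ltNge => /ltW yx; rewrite maxC distrC [`|x - y|]distrC; exact: H yx y0 x0.
move=> x0 y0; rewrite max_r // !ler0_norm ?subr_le0 ?tau_nondecreasing // !opprB.
have [y00|y0'] := eqVneq y 0.
  have x00 : x = 0 by apply/le_anti; rewrite x0 -y00 xy.
  by rewrite x00 y00 !subrr mulr0.
by apply: tau_increment_le; rewrite // lt_def y0' y0.
Qed.

Lemma derive1_tau_le_dtau M a k : 0 <= a -> 0 < M -> 0 < k -> M <= a + k ->
  tau' M <= dtau tau a + tau' k.
Proof.
move=> a0 M0 k0 Mak; have [a00|apos] := eqVneq a 0.
  rewrite a00 add0r in Mak; have := derive1_tau_nondecreasing M0 Mak.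
  by have := dtau_ge0 0; rewrite a00; lra.
have a0' : 0 < a by rewrite lt_def apos.
have := derive1_tau_nondecreasing M0 Mak; have := derive1_tau_subadditive a0' k0.
by rewrite /dtau a0'; lra.
Qed.

Lemma tau_dist_le_dtau a b c del Del : 0 <= a -> 0 <= b -> 0 <= c ->
  `|b - c| <= del -> `|c - a| <= Del ->
  `|tau b - tau c| <= del * (dtau tau a + tau' (Del + del + 1)).
Proof.
move=> a0 b0 c0 hbc hca.
have del0 : 0 <= del := le_trans (normr_ge0 _) hbc.
have Del0 : 0 <= Del := le_trans (normr_ge0 _) hca.
have k0 : 0 < Del + del + 1 by lra.
have dta := dtau_ge0 a; have fk := derive1_tau_gt0 k0.
apply: le_trans (tau_dist_le b0 c0) _.
set M := Num.max b c.
have [bM cM] : b <= M /\ c <= M by split; rewrite le_max lexx ?orbT.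
have [M0|Mpos] := eqVneq M 0.
  have -> : b = c by apply/eqP; rewrite eq_le; apply/andP; split; lra.
  by rewrite subrr normr0 mulr0 mulr_ge0 //; lra.
have M0 : 0 < M by rewrite lt_def Mpos (le_trans b0 bM).
have MaK : M <= a + (Del + del + 1).
  move: hbc hca; rewrite ge_max !ler_norml => /andP[? ?] /andP[? ?].
  by apply/andP; split; lra.
rewrite mulrC ler_pM ?normr_ge0 ?(ltW (derive1_tau_gt0 M0)) //.
exact: derive1_tau_le_dtau.
Qed.

End TauClass.

Section IntegrableReal.
Variables (R : realType) (dm : measure_display) (Omega : measurableType dm).
Variable P : probability Omega R.

Lemma integrable_subr (F G : Omega -> R) : P.-integrable setT (EFin \o F) ->
  P.-integrable setT (EFin \o G) -> P.-integrable setT (EFin \o (fun w => F w - G w)).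
Proof.
move=> iF iG; have := integrableB measurableT iF iG.
by apply: (eq_integrable measurableT) => w _.
Qed.

Lemma integrable_mulr (c : R) (F : Omega -> R) : P.-integrable setT (EFin \o F) ->
  P.-integrable setT (EFin \o (fun w => c * F w)).
Proof.
move=> iF; have := integrableZl measurableT c iF.
by apply: (eq_integrable measurableT) => w _.
Qed.

Lemma integrable_cst (c : R) : P.-integrable setT (EFin \o (fun _ : Omega => c)).
Proof. exact: finite_measure_integrable_cst. Qed.

Lemma Rintegral_cst_prob (c : R) : Rintegral P setT (fun _ => c) = c.
Proof.
by rewrite Rintegral_cst // (congr1 fine (probability_setT P)) mulr1.
Qed.

Lemma Rintegral_lt0_ae (F : Omega -> R) (A : set Omega) :
  P.-integrable setT (EFin \o F) -> measurable A -> P A = 1%E ->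
  (forall w, A w -> F w < 0) -> Rintegral P setT F < 0.
Proof.
move=> iF mA PA FA.
have mF : measurable_fun setT F by apply/measurable_EFinP; exact: measurable_int iF.
have iabs : P.-integrable setT (EFin \o (fun w => `|F w|)).
  by have := integrable_abse iF; apply: (eq_integrable measurableT) => w _.
have PC : P (~` A) = 0%E by rewrite probability_setC // PA subee.
have eF : Rintegral P setT F = Rintegral P setT (fun w => - `|F w|).
  congr fine; apply: (ae_eq_integral (fun w => (- `|F w|)%:E)) => //.
  - by apply/measurable_EFinP.
  - by apply/measurable_EFinP; apply: measurableT_comp => //; apply: measurableT_comp.
  - exists (~` A); split => //; first exact: measurableC.
    by move=> w /= hw Aw; apply: hw => _; rewrite ltr0_norm ?opprK ?FA.
have eN : Rintegral P setT (fun w => - `|F w|) = - Rintegral P setT (fun w => `|F w|).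
  by rewrite -mulN1r -RintegralZl //; apply: eq_Rintegral => w _; rewrite mulN1r.
rewrite ltNge; apply/negP; rewrite eF eN oppr_ge0 => I0.
have I0' : (\int[P]_w `|(EFin \o F) w|)%E = 0%E.
  rewrite -(fineK (integrable_fin_num measurableT iabs)) -/(Rintegral P setT _).
  by congr EFin; apply/eqP; rewrite eq_le I0 Rintegral_ge0.
have [B [mB PB sub]] := (ae_eq_integral_abs P measurableT
  (ltac:(by apply/measurable_EFinP) : measurable_fun setT (EFin \o F))).1 I0'.
have AB : A `<=` B.
  move=> w Aw; apply: sub => /= h; have := FA w Aw; have [] := h I => ->; lra.
have : (1 <= 0 :> \bar R)%E.
  by rewrite -[X in (X <= _)%E]PA -PB; apply: le_measure; rewrite ?inE.
by rewrite lee_fin; lra.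
Qed.

End IntegrableReal.

Section VarianceFunctional.
Variables (R : realType) (Q : Type) (d : Q -> Q -> R) (dm : measure_display)
  (Omega : measurableType dm) (P : probability Omega R) (Y : Omega -> Q) (o : Q)
  (tau : R -> R).
Hypotheses (Hh : hadamard d) (HY : d_measurable d Y) (Ht : S0plus tau)
  (Hint : (\int[P]_w (dtau tau (d (Y w) o))%:E < +oo)%E).
Local Notation tau' := (derive1 tau).
Local Notation V := (var_fun d P Y tau o).

Lemma measurable_dist_to q : measurable_fun setT (fun w => d (Y w) q).
Proof.
apply: (measurability _ (RGenOInfty.measurableE R)) => //.
move=> _ [_ [x ->] <-]; rewrite setTI.
have -> : (fun w => d (Y w) q) @^-1` `]x, +oo[%classic = Y @^-1` [set z | x < d z q].
  by apply/seteqP; split => w /=; rewrite in_itv /= andbT.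
apply: HY => z /= hz; exists (d z q - x); first by rewrite subr_gt0.
by move=> y hy; have := dist_triangle Hh z y q; lra.
Qed.

Lemma measurable_tau_dist q : measurable_fun setT (fun w => tau (d (Y w) q)).
Proof.
have -> : (fun w => tau (d (Y w) q)) = (fun x => tau (Num.max x 0)) \o (fun w => d (Y w) q).
  by apply: funext => w /=; rewrite max_l // dist_ge0.
apply: measurableT_comp (measurable_dist_to q).
exact: nondecreasing_measurable measurableT (tau_max0_nondecreasing Ht).
Qed.

Lemma measurable_dtau_dist q : measurable_fun setT (fun w => dtau tau (d (Y w) q)).
Proof.
apply: (measurableT_comp (f := dtau tau)) (measurable_dist_to q).
exact: nondecreasing_measurable measurableT (dtau_nondecreasing Ht).
Qed.

Lemma integrable_dtau : P.-integrable setT (EFin \o (fun w => dtau tau (d (Y w) o))).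
Proof.
apply/integrableP; split; first by apply/measurable_EFinP; exact: measurable_dtau_dist.
apply: le_lt_trans Hint; rewrite le_eqVlt; apply/orP; left; apply/eqP.
by apply: eq_integral => w _ /=; rewrite ger0_norm // dtau_ge0.
Qed.

Lemma integrable_affine_dtau (c k : R) :
  P.-integrable setT (EFin \o (fun w => c * (dtau tau (d (Y w) o) + k))).
Proof.
have := integrableD measurableT integrable_dtau (integrable_cst P k).
by move/(integrableZl measurableT c); apply: (eq_integrable measurableT) => w _.
Qed.

Definition mean_dtau := Rintegral P setT (fun w => dtau tau (d (Y w) o)).

Lemma Rintegral_affine_dtau (c k : R) :
  Rintegral P setT (fun w => c * (dtau tau (d (Y w) o) + k)) = c * (mean_dtau + k).
Proof.
rewrite RintegralZl ?RintegralD ?Rintegral_cst_prob //.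
- exact: integrable_dtau.
- exact: integrable_cst.
- exact: (integrableD measurableT integrable_dtau (integrable_cst P k)).
Qed.

Lemma tau_dist_diff_le w q q' : `|tau (d (Y w) q) - tau (d (Y w) q')| <=
  d q q' * (dtau tau (d (Y w) o) + tau' (d q' o + d q q' + 1)).
Proof.
apply: (tau_dist_le_dtau Ht); rewrite ?dist_ge0 // ler_norml.
- have := dist_triangle Hh (Y w) q q'; have := dist_triangle Hh (Y w) q' q.
  by rewrite (distC Hh q' q); lra.
- have := dist_triangle Hh (Y w) q' o; have := dist_triangle Hh (Y w) o q'.
  by rewrite (distC Hh o q'); lra.
Qed.

Lemma integrable_tau_diff q q' :
  P.-integrable setT (EFin \o (fun w => tau (d (Y w) q) - tau (d (Y w) q'))).
Proof.
apply: (le_integrable measurableT _ _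
  (integrable_affine_dtau (d q q') (tau' (d q' o + d q q' + 1)))).
- by apply/measurable_EFinP; apply: measurable_funB; apply: measurable_tau_dist.
- move=> w _ /=; rewrite lee_fin; apply: le_trans (ler_norm _).
  exact: tau_dist_diff_le.
Qed.

Lemma var_funB q q' :
  V q - V q' = Rintegral P setT (fun w => tau (d (Y w) q) - tau (d (Y w) q')).
Proof.
rewrite /var_fun -[fine _ - fine _]/(Rintegral P setT _ - Rintegral P setT _).
rewrite -RintegralB //; try exact: integrable_tau_diff.
by apply: eq_Rintegral => w _; ring.
Qed.

Lemma var_fun_change_origin o' q : var_fun d P Y tau o' q = V q - V o'.
Proof. by rewrite var_funB. Qed.

Lemma var_fun_lipschitz q q' :
  `|V q' - V q| <= d q q' * (mean_dtau + tau' (d q o + d q q' + 1)).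
Proof.
have pw w : `|tau (d (Y w) q') - tau (d (Y w) q)| <=
    d q q' * (dtau tau (d (Y w) o) + tau' (d q o + d q q' + 1)).
  by rewrite -(distC Hh q' q); exact: tau_dist_diff_le.
rewrite -Rintegral_affine_dtau ler_norml; apply/andP; split.
- rewrite -opprB lerN2 var_funB; apply: le_Rintegral => //.
  + exact: integrable_tau_diff.
  + exact: integrable_affine_dtau.
  + by move=> w _; apply: le_trans _ (pw w); rewrite distrC ler_norm.
- rewrite var_funB; apply: le_Rintegral => //.
  + exact: integrable_tau_diff.
  + exact: integrable_affine_dtau.
  + by move=> w _; apply: le_trans _ (pw w); rewrite ler_norm.
Qed.

Lemma mean_dtau_ge0 : 0 <= mean_dtau.
Proof. by apply: Rintegral_ge0 => w _; exact: dtau_ge0. Qed.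

Lemma var_fun_continuous q e : 0 < e ->
  exists2 r, 0 < r & forall q', d q q' < r -> `|V q' - V q| < e.
Proof.
move=> e0; set c := mean_dtau + tau' (d q o + 2).
have c0 : 0 < c.
  by rewrite ltr_pwDr ?mean_dtau_ge0 // derive1_tau_gt0 //; have := dist_ge0 Hh q o; lra.
exists (Num.min 1 (e / c)); first by rewrite lt_min ltr01 divr_gt0.
move=> q'; rewrite lt_min => /andP[h1 h2].
apply: le_lt_trans (var_fun_lipschitz q q') _.
have := dist_ge0 Hh q o; have := dist_ge0 Hh q q' => hqq' hqo.
have : tau' (d q o + d q q' + 1) <= tau' (d q o + 2).
  by apply: (derive1_tau_nondecreasing Ht); lra.
have : d q q' * c < e by rewrite -ltr_pdivlMr.
by rewrite /c; have := mean_dtau_ge0; nra.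
Qed.

Lemma var_fun_convex : d_convex_fun d V.
Proof.
move=> q p g qp geo x y t hx hy ht /=.
have HC := geodesic_interpolant Hh geo hx hy ht.
have pw w : tau (d (Y w) (g ((1 - t) * x + t * y))) - tau (d (Y w) o) <=
    (1 - t) * (tau (d (Y w) (g x)) - tau (d (Y w) o)) +
    t * (tau (d (Y w) (g y)) - tau (d (Y w) o)).
  have := tau_convex Ht (dist_ge0 Hh (Y w) (g x)) (dist_ge0 Hh (Y w) (g y)) ht.
  have := tau_nondecreasing Ht (dist_ge0 Hh _ _) (interpolant_dist_convex Hh (Y w) ht HC).
  lra.
have i1 := integrable_mulr (1 - t) (integrable_tau_diff (g x) o).
have i2 := integrable_mulr t (integrable_tau_diff (g y) o).
have -> : (1 - t) * V (g x) + t * V (g y) = Rintegral P setT (fun w =>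
    (1 - t) * (tau (d (Y w) (g x)) - tau (d (Y w) o)) +
    t * (tau (d (Y w) (g y)) - tau (d (Y w) o))).
  by rewrite RintegralD // !RintegralZl //; exact: integrable_tau_diff.
apply: le_Rintegral => //; first exact: integrable_tau_diff.
by have := integrableD measurableT i1 i2; apply: (eq_integrable measurableT) => w _.
Qed.

Lemma var_fun_lt_of_closer (A : set Omega) p q : measurable A -> P A = 1%E ->
  (forall w, A w -> d (Y w) p < d (Y w) q) -> V p < V q.
Proof.
move=> mA PA hA; rewrite -subr_lt0 var_funB.
apply: (Rintegral_lt0_ae (integrable_tau_diff p q) mA PA) => w Aw.
by rewrite subr_lt0; apply: (tau_increasing Ht (dist_ge0 Hh _ _) (hA w Aw)).
Qed.

Definition dtau_trunc (n : nat) (w : Omega) : R :=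
  if d (Y w) o <= n%:R then tau' 1 + dtau tau (d (Y w) o) else 0.

Lemma dtau_trunc_ge0 n w : 0 <= dtau_trunc n w.
Proof.
by rewrite /dtau_trunc; case: ifP => // _; rewrite addr_ge0 ?dtau_ge0 ?ltW ?derive1_tau_gt0.
Qed.

Lemma measurable_dtau_trunc n : measurable_fun setT (dtau_trunc n).
Proof.
apply: measurable_fun_ifT.
- by apply: measurable_fun_ler; [exact: measurable_dist_to | exact: measurable_cst].
- by apply: measurable_funD; [exact: measurable_cst | exact: measurable_dtau_dist].
- exact: measurable_cst.
Qed.

Lemma integrable_dtau_trunc n : P.-integrable setT (EFin \o dtau_trunc n).
Proof.
apply: (le_integrable measurableT _ _ (integrable_affine_dtau 1 (tau' 1))).
  by apply/measurable_EFinP; exact: measurable_dtau_trunc.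
move=> w _ /=; rewrite lee_fin ger0_norm ?dtau_trunc_ge0 // mul1r.
have := dtau_ge0 Ht (d (Y w) o); have := derive1_tau_gt0 Ht ltr01.
by move=> ? ?; rewrite ger0_norm /dtau_trunc; [case: ifP => _|]; lra.
Qed.

Lemma exists_dtau_trunc_large :
  exists n : nat, mean_dtau + tau' 1 / 2 <= Rintegral P setT (dtau_trunc n).
Proof.
have f1 := derive1_tau_gt0 Ht ltr01.
set L := (\int[P]_w ((tau' 1 + dtau tau (d (Y w) o))%:E))%E.
have LE : L = (tau' 1 + mean_dtau)%:E.
  have iL : P.-integrable setT (EFin \o (fun w => tau' 1 + dtau tau (d (Y w) o))).
    have := integrable_affine_dtau 1 (tau' 1).
    by apply: (eq_integrable measurableT) => w _ /=; rewrite mul1r addrC.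
  rewrite -[L](@fineK R); last exact: integrable_fin_num iL.
  congr EFin; rewrite -[fine L]/(Rintegral P setT _) RintegralD ?Rintegral_cst_prob //.
  - exact: integrable_cst.
  - exact: integrable_dtau.
have cv : (\int[P]_(x in setT) ((EFin \o dtau_trunc n) x))%E @[n --> \oo] --> L.
  have -> : L = (\int[P]_(x in setT) limn (fun n => (EFin \o dtau_trunc n) x))%E.
    apply: eq_integral => w _; apply/esym/cvg_lim => //; apply: cvg_near_cst.
    by near=> n; rewrite /= /dtau_trunc ifT //; near: n; exact: nbhs_infty_ger.
  apply: cvg_monotone_convergence => //.
  - by move=> n; apply/measurable_EFinP; exact: measurable_dtau_trunc.
  - by move=> n w _; rewrite /= lee_fin dtau_trunc_ge0.
  - move=> w _ n m nm; rewrite /= lee_fin /dtau_trunc.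
    case: ifP => hn; case: ifP => hm //; last by rewrite addr_ge0 ?dtau_ge0 ?ltW.
    by move: hm; rewrite (le_trans hn) // ler_nat.
apply: contrapT => /forallNP hn.
suff : (L <= (mean_dtau + tau' 1 / 2)%:E)%E by rewrite LE lee_fin; lra.
apply: (cvge_to_le cv); near=> n.
rewrite -(fineK (integrable_fin_num measurableT (integrable_dtau_trunc n))) lee_fin.
by apply/ltW; rewrite ltNge; apply/negP/hn.
Unshelve. all: by end_near.
Qed.

Lemma tau_diff_ge_trunc n q w :
  d q o * (dtau_trunc n w - dtau tau (d (Y w) o)) - (tau' 1 * (n%:R + 1) + tau n%:R) <=
  tau (d (Y w) q) - tau (d (Y w) o).
Proof.
set D := d q o; set a := d (Y w) o; set b := d (Y w) q.
have [D0 a0 b0] : [/\ 0 <= D, 0 <= a & 0 <= b] by split; exact: dist_ge0.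
have Db : D <= b + a by have := dist_triangle Hh q (Y w) o; rewrite (distC Hh q (Y w)).
have ab : a <= b + D := dist_triangle Hh _ _ _.
have dta := dtau_ge0 Ht a; have f1 := derive1_tau_gt0 Ht ltr01.
have taun := tau_ge0 Ht (ler0n R n).
have C0 : 0 <= tau' 1 * (n%:R + 1) + tau n%:R.
  by apply: addr_ge0 => //; apply: mulr_ge0; [exact: ltW | apply: addr_ge0].
rewrite /dtau_trunc -/a; case: ifP => an.
  (* near [o]: [tau] grows at least linearly with slope [tau' 1] *)
  have := tau_ge_linear Ht ltr01 b0; have := tau_nondecreasing Ht a0 an.
  have : D * tau' 1 <= (b + a) * tau' 1 by rewrite ler_pM2r.
  have : a * tau' 1 <= n%:R * tau' 1 by rewrite ler_pM2r.
  by rewrite addrK; move: taun; set N := n%:R; lra.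
(* far from [o]: [tau] is [tau' a]-Lipschitz below [a] *)
have apos : 0 < a by apply: le_lt_trans (ler0n R n) _; rewrite ltNge an.
rewrite sub0r mulrN; have := mulr_ge0 D0 dta.
have [ba|ab'] := leP a b; first by have := tau_nondecreasing Ht a0 ba; lra.
have := tau_increment_le Ht b0 (ltW ab') apos.
have -> : dtau tau a = tau' a by rewrite /dtau apos.
have := derive1_tau_gt0 Ht apos; nra.
Qed.

Lemma var_fun_coercive : exists al be : R, 0 < al /\ forall q, al * d q o - be <= V q.
Proof.
have [n hn] := exists_dtau_trunc_large.
have f1 := derive1_tau_gt0 Ht ltr01.
set C := tau' 1 * (n%:R + 1) + tau n%:R.
exists (tau' 1 / 2), C; split=> [|q]; first by rewrite divr_gt0.
have iG := integrable_subr (integrable_dtau_trunc n) integrable_dtau.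
have iL := integrable_subr (integrable_mulr (d q o) iG) (integrable_cst P C).
have := le_Rintegral measurableT iL (integrable_tau_diff q o) (fun w _ => tau_diff_ge_trunc n q w).
rewrite -[Rintegral _ _ (fun w => tau _ - tau _)]/(V q).
rewrite RintegralB //; [|exact: integrable_mulr|exact: integrable_cst].
rewrite RintegralZl // RintegralB //; [|exact: integrable_dtau_trunc|exact: integrable_dtau].
rewrite Rintegral_cst_prob -/mean_dtau => h.
have : d q o * (tau' 1 / 2) <= d q o * (Rintegral P setT (dtau_trunc n) - mean_dtau).
  by rewrite ler_wpM2l ?dist_ge0 //; lra.
lra.
Qed.

Lemma argmin_var_fun_origin o' : argmin (var_fun d P Y tau o') = argmin V.
Proof.
apply/seteqP; split=> q /= h p; have := h p; rewrite !(var_fun_change_origin o'); lra.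
Qed.

Lemma measurable_preimage_closed S : d_closed d S -> measurable (Y @^-1` S).
Proof.
move=> clS; rewrite -[Y @^-1` S]setCK preimage_setC; apply: measurableC.
apply: HY => x /= nx; have : ~ (forall e, 0 < e -> exists y, S y /\ d x y < e).
  by move=> H; apply/nx/clS.
move=> /existsNP [e /not_implyP [e0 /forallNP H]].
by exists e => // y dy Sy; apply: (H y).
Qed.

(* A mean outside a closed convex support [S] would be beaten by its projection onto [S]. *)
Lemma argmin_sub_support S : d_closed d S -> d_convex_set d S -> P (Y @^-1` S) = 1%E ->
  argmin V `<=` S.
Proof.
move=> clS cS PS q hq; apply: contrapT => nq.
have S0 : S !=set0.
  apply/set0P/negP => /eqP S0; move: PS; rewrite S0 preimage_set0 measure0.
  by move=> /(congr1 fine) /=; lra.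
have [p Sp hp] := exists_projection Hh q S0 clS cS.
have qp : 0 < d q p by apply: (dist_gt0 Hh) => qp; apply: nq; rewrite qp.
have : V p < V q.
  apply: (var_fun_lt_of_closer (measurable_preimage_closed clS) PS) => w /= Yw.
  have := hp _ Yw; rewrite (distC Hh p) (distC Hh q) => h.
  have := dist_ge0 Hh (Y w) p; have := dist_ge0 Hh (Y w) q; nra.
by have := hq p; lra.
Qed.

End VarianceFunctional.

Section ConvexArgmin.
Variables (R : realType) (Q : Type) (d : Q -> Q -> R) (V : Q -> R) (o : Q).
Hypotheses (Hh : hadamard d)
  (Vcont : forall q e, 0 < e -> exists2 r, 0 < r & forall q', d q q' < r -> `|V q' - V q| < e)
  (Vconv : d_convex_fun d V)
  (Vcoer : exists al be : R, 0 < al /\ forall q, al * d q o - be <= V q).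

Definition sublevel (c : R) : set Q := [set q | V q <= c].

Lemma sublevel_closed c : d_closed d (sublevel c).
Proof.
move=> x H; rewrite /sublevel /= leNgt; apply/negP => hx.
have [r r0 hr] : exists2 r, 0 < r & forall y, d x y < r -> `|V y - V x| < V x - c.
  by apply: Vcont; rewrite subr_gt0.
have [y [hy dy]] := H r r0; have := hr y dy.
by rewrite ltr_norml => /andP[h1 _]; rewrite /sublevel /= in hy; lra.
Qed.

Lemma sublevel_convex c : d_convex_set d (sublevel c).
Proof.
move=> q p g Sq Sp qp geo t /andP[t0 t1].
have D0 : 0 < d q p := dist_gt0 Hh qp.
set l := t / d q p.
have hl : 0 <= l <= 1 by rewrite divr_ge0 ?(ltW D0) // ler_pdivrMr // mul1r.
have h0 : 0 <= (0 : R) <= d q p by rewrite lexx ltW.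
have hD : 0 <= d q p <= d q p by rewrite lexx ltW.
have := Vconv qp geo h0 hD hl.
have lD : l * d q p = t by rewrite /l mulfVK ?gt_eqF.
rewrite mulr0 add0r lD; case: geo => g0 g1 _; rewrite /= g0 g1.
by rewrite /sublevel /= in Sq Sp *; case/andP: hl => l0 l1; nra.
Qed.

Lemma sublevel_bounded c : d_bounded d (sublevel c).
Proof.
have [al [be [al0 H]]] := Vcoer.
exists o, ((c + be) / al) => q hq; rewrite /sublevel /= in hq.
by rewrite ler_pdivlMr // (distC Hh o q); have := H q; lra.
Qed.

Lemma bounded_below : exists b, forall q, b <= V q.
Proof.
have [al [be [al0 H]]] := Vcoer.
by exists (- be) => q; have := H q; have := dist_ge0 Hh q o; nra.
Qed.

Definition inf_value : R := inf (range V).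

Lemma inf_value_le q : inf_value <= V q.
Proof.
have [b hb] := bounded_below.
by apply: ge_inf; [exists b => _ [p _ <-] | exists q].
Qed.

Lemma argminE : argmin V = sublevel inf_value.
Proof.
apply/seteqP; split => q /=.
  by move=> h; apply: lb_le_inf; [exists (V o), o | move=> _ [p _ <-]; apply: h].
by move=> h p; apply: le_trans h (inf_value_le p).
Qed.

Lemma argmin_nonempty : argmin V !=set0.
Proof.
pose S n := sublevel (inf_value + n.+1%:R^-1).
have S0 n : S n !=set0.
  have [b hb] := bounded_below.
  have hi : has_inf (range V) by split; [exists (V o), o | exists b => _ [p _ <-]].
  have i0 : 0 < (n.+1%:R : R)^-1 by rewrite invr_gt0 ltr0n.
  by have [_ [q _ <-] h] := inf_adherent i0 hi; exists q; apply: ltW.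
have decS m n : (m <= n)%N -> S n `<=` S m.
  by move=> mn q; rewrite /S /sublevel /= => /le_trans; apply; rewrite lerD2l invS_le.
have [c [r hr]] := sublevel_bounded (inf_value + 0.+1%:R^-1).
have bdS q : S 0 q -> d o q <= d o c + r.
  by move=> /hr; have := dist_triangle Hh o c q; lra.
have [p Sp] := nested_closed_convex_meet Hh S0 (fun n => @sublevel_closed _)
  (fun n => @sublevel_convex _) decS bdS.
exists p; rewrite argminE /sublevel /=.
apply: (ler_of_le_addM ler01) => e e0 _; have [n hn] := exists_invS_lt e0.
by have := Sp n; rewrite /S /sublevel /=; move: hn; set i := n.+1%:R^-1; lra.
Qed.

End ConvexArgmin.

Unset Implicit Arguments.
Set Strict Implicit.

Theorem mainTheorem6 (R : realType) (Q : Type) (d : Q -> Q -> R)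
  (dm : measure_display) (Omega : measurableType dm) (P : probability Omega R)
  (Y : Omega -> Q) (o : Q) (tau : R -> R) :
  hadamard d -> d_measurable d Y -> S0plus tau ->
  (\int[P]_w (dtau tau (d (Y w) o))%:E < +oo)%E ->
  (* (i) *)
  ((forall q, P.-integrable setT (fun w => (tau (d (Y w) q) - tau (d (Y w) o))%:E))
   /\ d_convex_fun d (var_fun d P Y tau o)) /\
  (* (ii) *)
  (let M := argmin (var_fun d P Y tau o) in
   [/\ M !=set0, d_closed d M, d_bounded d M, d_convex_set d M &
       forall o' : Q, argmin (var_fun d P Y tau o') = M]) /\
  (* (iii) *)
  (forall Yset : set Q, d_closed d Yset -> d_convex_set d Yset ->
     P (Y @^-1` Yset) = 1%E ->
     argmin (var_fun d P Y tau o) `<=` Yset).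
Proof.
move=> Hh HY Ht Hint.
have Vcont := var_fun_continuous Hh HY Ht Hint.
have Vconv := var_fun_convex Hh HY Ht Hint.
have Vcoer := var_fun_coercive Hh HY Ht Hint.
split; [split | split].
- by move=> q; exact: integrable_tau_diff Hh HY Ht Hint q o.
- exact: Vconv.
- rewrite /= (argminE Hh Vcoer); split.
  + by rewrite -(argminE Hh Vcoer); exact: argmin_nonempty Hh Vcont Vconv Vcoer.
  + exact: sublevel_closed Vcont _.
  + exact: sublevel_bounded Hh Vcoer _.
  + exact: sublevel_convex Hh Vconv _.
  + by move=> o'; rewrite (argmin_var_fun_origin Hh HY Ht Hint) -(argminE Hh Vcoer).
- by move=> S clS cS PS; apply: (argmin_sub_support Hh HY Ht Hint).
Qed.
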